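(* Let $\mathcal{A}$ be a linear hyperplane arrangement in $\mathbb{R}^n$ and let $U_1,U_2$ be $k$-dimensional subspaces of $\mathbb{R}^n$. If $U_1,U_2\in\mathcal{S}_{i,P}$ for some $i\in\{0,\dots,k\}$ and some flat $P\in L(\mathcal{A}^{(k-i)})$, then $L(\mathcal{A}|_{U_1})\cong L(\mathcal{A}|_{U_2})$. In particular, if $\mathcal{A}$ is essential (i.e. $T=\{0\}$) and $\Delta(U_1),\Delta(U_2)\in P^\circ$ for some $P\in L(\mathcal{A}^{(k)})$, then $L(\mathcal{A}|_{U_1})\cong L(\mathcal{A}|_{U_2})$.
   Context: $\mathcal{A}=\{H_i=\{v:\langle\alpha_i,v\rangle=0\}:i=1,\dots,m\}$, $\alpha_i\neq0$, $T=\bigcap_i H_i$. $L(\mathcal{A})$ is the intersection lattice (intersections of subfamilies incl. $\mathbb{R}^n$), $L_k(\mathcal{A})$ its elements of codimension $k$. Restriction: $\mathcal{A}|_U=\{H\cap U:H\in\mathcal{A},U\not\subseteq H\}$. Plücker coordinates: for a $d$-dimensional $W$ with $d\times n$ row-basis matrix $A$, $\Delta(W)=(\Delta_I(W))_{I\in\binom{[n]}{d}}$, $\Delta_I(W)$ the minor of $A$ on columns $I$ (defined up to nonzero scalar). For $X\in L_k(\mathcal{A})$, $H(X)=\{x\in\mathbb{R}^{\binom{[n]}{k}}:\sum_{I}(-1)^{k(k+1)/2+\sum_{i\in I}i}\Delta_{[n]\setminus I}(X)x_I=0\}$, and $\mathcal{A}^{(k)}=\{H(X):X\in L_k(\mathcal{A})\}$.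 For $P$ a flat of an arrangement $\mathcal{B}$, $P^\circ=P\setminus\bigcup\{Q\in L(\mathcal{B}):Q\subsetneq P\}$. $\mathcal{S}_{i,P}=\{U\in\mathrm{Gr}(k,n):\dim(U\cap T)=i,\ \Delta(U\cap(U^\perp+T^\perp))\in P^\circ\}$ for $P\in L(\mathcal{A}^{(k-i)})$. *)

(* R : realType (the real numbers), subspaces of R^n as row
   spaces of matrices (mxalgebra), the Pluecker space R^{binom([n],d)} as
   functions on d-subsets of 'I_n. *)
From HB Require Import structures.
From mathcomp Require Import all_boot all_order all_algebra.
From mathcomp Require Import reals.
Unset Printing Implicit Defensive.
Import Order.TTheory GRing.Theory Num.Theory.
Local Open Scope ring_scope.

Section Defs.
Variable R : realType.
Variables n m : nat.
(* the arrangement A = {H_i = alpha_i^perp : i < m} in R^n *)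
Variable alpha : 'I_m -> 'rV[R]_n.

Definition hypmx (i : 'I_m) : 'M[R]_n := kermx (alpha i)^T.

(* intersection of the subfamily {H_i : i in S} (S = set0 gives R^n) *)
Definition flatmx (S : {set 'I_m}) : 'M[R]_n := (\bigcap_(i in S) hypmx i)%MS.

Definition Tmx : 'M[R]_n := flatmx [set: 'I_m].

Definition perpmx (U : 'M[R]_n) : 'M[R]_n := kermx U^T.

(* L(A|_U): intersections (inside U) of subfamilies of
   {H_i cap U : U not contained in H_i}, as canonical matrices <<_>> *)
Definition restr_flat (U X : 'M[R]_n) : Prop :=
  exists S : {set 'I_m},
    (forall i, i \in S -> ~~ (U <= hypmx i)%MS) /\
    X = (<< U :&: \bigcap_(i in S) (U :&: hypmx i) >>)%MS.

(* poset (hence lattice) isomorphism of two families of subspaces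
   ordered by inclusion *)
Definition lattice_iso (L1 L2 : 'M[R]_n -> Prop) : Prop :=
  exists f : 'M[R]_n -> 'M[R]_n,
    (forall X, L1 X -> L2 (f X)) /\
    (forall Y, L2 Y -> exists X, L1 X /\ f X = Y) /\
    (forall X Y, L1 X -> L1 Y -> ((X <= Y)%MS <-> (f X <= f Y)%MS)).

Definition ksub (d : nat) := {I : {set 'I_n} | #|I| == d}.

(* column selection: column j picks the j-th element (increasing order) of I *)
Definition selmx (d : nat) (I : {set 'I_n}) : 'M[R]_(n, d) :=
  \matrix_(a < n, j < d)
    ((a \in I) && (#|[set b in I | (val b < val a)%N]| == j))%:R.

(* a d x n row-basis of W (when \rank W = d): first d rows of row_ebase W,
   i.e. row_base W *)
Definition basismx (d : nat) (W : 'M[R]_n) : 'M[R]_(d, n) :=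
  pid_mx d *m row_ebase W.

Definition plucker (d : nat) (W : 'M[R]_n) (I : {set 'I_n}) : R :=
  \det (basismx d W *m selmx d I).

Definition plvec (d : nat) (W : 'M[R]_n) : ksub d -> R :=
  fun I => plucker d W (val I).

(* H(X) for X = flatmx S of codimension d (indices of [n] are 1-based) *)
Definition Hk (d : nat) (S : {set 'I_m}) (x : ksub d -> R) : Prop :=
  \sum_(I : ksub d)
     (-1) ^+ ((d * d.+1) %/ 2 + \sum_(a in val I) (val a).+1)%N
     * plucker (n - d)%N (flatmx S) (~: val I) * x I = 0.

(* L(A^{(d)}): intersections of subfamilies of {H(X) : X in L_d(A)};
   every X in L_d(A) is flatmx S for some S with codim d *)
Definition flat_k (d : nat) (P : (ksub d -> R) -> Prop) : Prop :=
  exists F : {set {set 'I_m}},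
    (forall S, S \in F -> (\rank (flatmx S) + d)%N = n) /\
    (forall x, P x <-> (forall S, S \in F -> Hk d S x)).

Definition flat_interior (d : nat) (P : (ksub d -> R) -> Prop)
  (x : ksub d -> R) : Prop :=
  P x /\
  (forall Q, flat_k d Q -> (forall y, Q y -> P y) -> (exists y, P y /\ ~ Q y) ->
     ~ Q x).

Definition S_iP (k i : nat) (P : (ksub (k - i)%N -> R) -> Prop) (U : 'M[R]_n)
  : Prop :=
  \rank U = k /\ \rank (U :&: Tmx)%MS = i /\
  flat_interior (k - i)%N P (plvec (k - i)%N (U :&: (perpmx U + perpmx Tmx))%MS).

End Defs.

Arguments hypmx {R n m} alpha i.
Arguments flatmx {R n m} alpha S.
Arguments Tmx {R n m} alpha.
Arguments perpmx {R n} U.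
Arguments restr_flat {R n m} alpha U X.
Arguments lattice_iso {R n} L1 L2.
Arguments ksub n d : clear implicits.
Arguments selmx {R n} d I.
Arguments basismx {R n} d W.
Arguments plucker {R n} d W I.
Arguments plvec {R n} d W I.
Arguments Hk {R n m} alpha d S x.
Arguments flat_k {R n m} alpha d P.
Arguments flat_interior {R n m} alpha d P x.
Arguments S_iP {R n m} alpha k i P U.

From HB Require Import structures.
From mathcomp Require Import all_boot all_order all_algebra.
From mathcomp Require Import reals.
From mathcomp Require Import zify.
From mathcomp Require Import ring.
Set Implicit Arguments. Unset Strict Implicit. Unset Printing Implicit Defensive.
Import Order.TTheory GRing.Theory Num.Theory.
Local Open Scope ring_scope.

(* The lattice L(A|_U) is determined by the ranks of U :&: X for the flats X
   of A.  Splitting U orthogonally as (U :&: T) + W with W = U :&: (U^perp +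
   T^perp), that rank is rank (U :&: T) + rank (W :&: X), and W :&: T = 0.  For
   such W, a greedy choice of hyperplanes shows that the ranks of W :&: X are
   determined by which flats of codimension dim W meet W trivially; and W
   meets such a flat X nontrivially exactly when Delta(W) lies on H(X), by a
   generalized Laplace expansion of the determinant of bases of W and X
   stacked together.  Two points of the same P° lie on the same hyperplanes
   H(X), so U1 and U2 yield the same ranks. *)

Definition pos_in n (I : {set 'I_n}) (a : 'I_n) : nat :=
  #|[set b in I | (val b < val a)%N]|.

Section PositionInSet.
Variable n : nat.
Implicit Types (I : {set 'I_n}) (a b : 'I_n).

Lemma pos_in_lt I a b : a \in I -> (val a < val b)%N -> (pos_in I a < pos_in I b)%N.
Proof.
move=> aI ab; apply: proper_card; rewrite properE; apply/andP; split.
  by apply/subsetP => x; rewrite !inE => /andP[-> /ltn_trans->].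
by apply/subsetPn; exists a; rewrite !inE ?aI ?ltnn ?andbF.
Qed.

Lemma pos_in_inj I : {in I &, injective (pos_in I)}.
Proof.
move=> a b aI bI e; apply/val_inj/eqP.
by case: ltngtP => // [/(pos_in_lt aI) | /(pos_in_lt bI)]; rewrite e ltnn.
Qed.

Lemma pos_in_ltcard I a : a \in I -> (pos_in I a < #|I|)%N.
Proof.
move=> aI; apply: proper_card; rewrite properE; apply/andP; split.
  by apply/subsetP => x; rewrite !inE => /andP[].
by apply/subsetPn; exists a; rewrite ?inE ?ltnn ?andbF.
Qed.

Lemma pos_in_onto I c : (c < #|I|)%N -> exists2 a, a \in I & pos_in I a = c.
Proof.
set s := [seq pos_in I a | a <- enum I].
have s_uniq : uniq s.
  by rewrite map_inj_in_uniq ?enum_uniq // => a b; rewrite !mem_enum; apply: pos_in_inj.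
have s_sub : {subset s <= iota 0 #|I|}.
  by move=> _ /mapP[a aI ->]; rewrite mem_iota pos_in_ltcard // -mem_enum.
have [|_ s_eq] := uniq_min_size s_uniq s_sub; first by rewrite size_map size_iota cardE.
move=> cI; have : c \in iota 0 #|I| by rewrite mem_iota.
by rewrite -s_eq => /mapP[a]; rewrite mem_enum => aI ->; exists a.
Qed.

Lemma pos_inD1 I a b : pos_in I b = (pos_in (I :\ a) b + ((a \in I) && (val a < val b)))%N.
Proof.
rewrite /pos_in (cardsD1 a [set x in I | (val x < val b)%N]) inE addnC; congr (_ + _)%N.
by congr (#|pred_of_set _|); apply/setP => x; rewrite !inE andbA.
Qed.

Lemma pos_in_setT a : pos_in [set: 'I_n] a = val a.
Proof.
have le_an : (val a <= n)%N := ltnW (ltn_ord a).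
have inj_w : injective (widen_ord le_an) by move=> x y [] /val_inj.
rewrite /pos_in (_ : [set b in _ | _] = widen_ord le_an @: [set: 'I_a]).
  by rewrite card_imset // cardsT card_ord.
apply/setP => b; rewrite !inE; apply/idP/imsetP => [| [b' _ ->]] //=.
by move=> ba; exists (Ordinal ba); rewrite ?inE //; apply/val_inj.
Qed.

End PositionInSet.

Section LiftSet.
Variable n : nat.
Implicit Types (j : 'I_n.+1) (I : {set 'I_n}).

Lemma notin_lift_imset j I : j \notin lift j @: I.
Proof. by apply/imsetP => -[a _ /eqP]; rewrite (negbTE (neq_lift _ _)). Qed.

Lemma lift_eqF j (a : 'I_n) : (lift j a == j) = false.
Proof. by rewrite eq_sym (negbTE (neq_lift _ _)). Qed.

Lemma pos_in_lift j I a : pos_in (lift j @: I) (lift j a) = pos_in I a.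
Proof.
rewrite /pos_in -(card_imset _ (@lift_inj _ j)); congr #|pred_of_set _|.
apply/setP => b; rewrite inE; case: (unliftP j b) => [b' -> | ->].
  rewrite !(mem_imset _ _ (@lift_inj _ j)) !inE /= /bump.
  by congr (_ && _); case: leqP; case: leqP => /=; lia.
by rewrite !(negbTE (notin_lift_imset _ _)).
Qed.

Lemma setC_lift j I : ~: (j |: lift j @: I) = lift j @: ~: I.
Proof.
apply/setP => x; rewrite !inE; case: (unliftP j x) => [x' ->|->].
  by rewrite lift_eqF /= !mem_imset ?inE //; apply: lift_inj.
by rewrite eqxx /= (negbTE (notin_lift_imset _ _)).
Qed.

Lemma preim_lift j I : lift j @^-1: (j |: lift j @: I) = I.
Proof. by apply/setP => x; rewrite !inE lift_eqF mem_imset //; apply: lift_inj. Qed.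

Lemma lift_preim j (I : {set 'I_n.+1}) : j \in I -> j |: lift j @: (lift j @^-1: I) = I.
Proof.
move=> jI; apply/setP => x; rewrite !inE; case: (unliftP j x) => [x' ->|->].
  by rewrite lift_eqF mem_imset ?inE //; apply: lift_inj.
by rewrite eqxx jI.
Qed.

End LiftSet.

Section ColumnSelection.
Variable R : realType.

Lemma selmxE n d (I : {set 'I_n}) a c :
  selmx (R:=R) d I a c = ((a \in I) && (pos_in I a == c))%:R.
Proof. by rewrite mxE. Qed.

Lemma selmx_setT n : selmx (R:=R) n [set: 'I_n] = 1%:M.
Proof. by apply/matrixP => a c; rewrite selmxE !mxE inE pos_in_setT. Qed.

Lemma mulmx_selmx_entry r n d (A : 'M[R]_(r, n)) (I : {set 'I_n}) x (c : 'I_d) a :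
  a \in I -> pos_in I a = c -> (A *m selmx d I) x c = A x a.
Proof.
move=> aI ra; rewrite mxE (bigD1 a) //= selmxE aI ra eqxx mulr1 big1 ?addr0 //.
move=> b ba; rewrite selmxE; case bI: (b \in I); last by rewrite mulr0.
case: eqP => [e|]; rewrite ?mulr0 //.
by move: ba; rewrite (pos_in_inj bI aI (etrans e (esym ra))) eqxx.
Qed.

Lemma col'_mulmx_selmx r n d (A : 'M[R]_(r, n.+1)) (j : 'I_n.+1) (I : {set 'I_n}) :
  col' j A *m selmx d I = A *m selmx d (lift j @: I).
Proof.
apply/matrixP => x c; rewrite mxE [RHS]mxE (bigD1_ord j) //= selmxE.
rewrite (negbTE (notin_lift_imset _ _)) mulr0 add0r; apply: eq_bigr => a _.
by rewrite mxE !selmxE pos_in_lift mem_imset //; apply: lift_inj.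
Qed.

Lemma col'_selmxD1 n d (I : {set 'I_n}) (a : 'I_n) (c : 'I_d.+1) :
  a \in I -> pos_in I a = c -> col' c (selmx (R:=R) d.+1 I) = selmx d (I :\ a).
Proof.
move=> aI ra; apply/matrixP => b c'; rewrite mxE !selmxE /= !inE.
have [-> | ba] := eqVneq b a; first by rewrite ra (negbTE (neq_bump _ _)) andbF.
case bI: (b \in I) => //=; congr (nat_of_bool _)%:R.
have ab_lt : (val a < val b)%N -> (c < pos_in I b)%N by rewrite -ra; apply: pos_in_lt.
have ba_lt : (val b < val a)%N -> (pos_in I b < c)%N by rewrite -ra; apply: pos_in_lt.
rewrite (pos_inD1 I a b) aI /= /bump in ab_lt ba_lt *.
have [ab | ab | /val_inj abE] := ltngtP (val a) (val b); last by rewrite abE eqxx in ba.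
  by have := ab_lt ab; rewrite ab; case: leqP => cc' /= lt; apply/eqP/eqP; lia.
have := ba_lt ab; rewrite (leq_gtF (ltnW ab)) addn0.
by case: leqP => cc' /= lt; apply/eqP/eqP; lia.
Qed.

Lemma row'_col'_mulmx p n k (A : 'M[R]_(p.+1, n)) (B : 'M[R]_(n, k.+1)) i j :
  row' i (col' j (A *m B)) = row' i A *m col' j B.
Proof. by apply/matrixP => x y; rewrite !mxE; apply: eq_bigr => z _; rewrite !mxE. Qed.

Lemma det_mulmx_selmx_row0 p n (A : 'M[R]_(p.+1, n)) (I : {set 'I_n}) : #|I| = p.+1 ->
  \det (A *m selmx p.+1 I) =
  \sum_(a in I) A 0 a * (-1) ^+ pos_in I a * \det (row' 0 A *m selmx p (I :\ a)).
Proof.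
move=> cI; rewrite (expand_det_row _ ord0).
rewrite (partition_big (fun a => inord (pos_in I a) : 'I_p.+1) predT) //=.
apply: eq_bigr => c _.
have [a aI ra] : exists2 a, a \in I & pos_in I a = c by apply: pos_in_onto; rewrite cI.
rewrite (big_pred1 a) => [|x /=]; last first.
  case xI: (x \in I) => /=; last by apply/esym/negbTE; apply: contraFneq xI => ->.
  apply/eqP/eqP => [/(congr1 val) /= | ->]; last by apply/val_inj; rewrite /= inordK ra.
  rewrite inordK -?cI ?pos_in_ltcard // -ra; exact: pos_in_inj.
rewrite (mulmx_selmx_entry _ _ aI ra) /cofactor row'_col'_mulmx (col'_selmxD1 aI ra).
by rewrite add0n ra mulrA.
Qed.

End ColumnSelection.

Section Laplace.
Variable R : realType.

Definition laplace_sign n d (I : {set 'I_n}) : R :=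
  (-1) ^+ ((d * d.+1) %/ 2 + \sum_(a in I) (val a).+1)%N.

Lemma sum_nat_of_bool_card n (A : {set 'I_n}) (P : pred 'I_n) :
  (\sum_(a in A) (P a : nat) = #|[set a in A | P a]|)%N.
Proof.
rewrite -sum1_card [RHS]big_mkcond [LHS]big_mkcond /=; apply: eq_bigr => a _.
by rewrite !inE; case: (a \in A); case: (P a).
Qed.

Lemma laplace_sign_lift n p (j : 'I_n.+1) (I : {set 'I_n}) : #|I| = p ->
  laplace_sign p.+1 (j |: lift j @: I) * (-1) ^+ pos_in (j |: lift j @: I) j =
  (-1) ^+ val j * laplace_sign p I.
Proof.
move=> cI; rewrite /laplace_sign -!exprD.
set above := #|[set a in I | (val j <= val a)%N]|.
set below := #|[set a in I | (val a < val j)%N]|.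
have sum_lift : (\sum_(a in j |: lift j @: I) (val a).+1 =
    j.+1 + \sum_(a in I) (val a).+1 + above)%N.
  rewrite big_setU1 ?notin_lift_imset //= big_imset /=; last by move=> x y _ _; apply: lift_inj.
  rewrite /above -sum_nat_of_bool_card -addnA -big_split /=; congr (_ + _)%N.
  by apply: eq_bigr => a _; rewrite /bump; lia.
have pos_j : pos_in (j |: lift j @: I) j = below.
  rewrite (pos_inD1 _ j) setU1K ?notin_lift_imset // setU11 ltnn andbF addn0.
  rewrite /pos_in /below -(card_imset _ (@lift_inj _ j)); congr #|pred_of_set _|.
  apply/setP => b; rewrite inE; case: (unliftP j b) => [b' -> | ->].
    rewrite !mem_imset ?inE; try exact: lift_inj.
    by case: (b' \in I) => //=; rewrite /bump; case: leqP => ?; apply/idP/idP; lia.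
  by rewrite ltnn andbF !(negbTE (notin_lift_imset _ _)).
have split_I : (above + below = p)%N.
  rewrite /above /below -!sum_nat_of_bool_card -big_split /= -cI -sum1_card.
  by apply: eq_bigr => a _; case: leqP.
have triangular : ((p.+1 * p.+2) %/ 2 = (p * p.+1) %/ 2 + p.+1)%N.
  rewrite (_ : p.+1 * p.+2 = p.+1 * 2 + p * p.+1)%N; last by lia.
  by rewrite divnMDl // addnC.
rewrite sum_lift pos_j triangular.
set t := ((p * p.+1) %/ 2)%N; set u := (\sum_(a in I) (val a).+1)%N.
have -> : (t + p.+1 + (j.+1 + u + above) + below = j + (t + u) + 2 * p.+1)%N by lia.
by rewrite exprD -[X in _ * X]signr_odd oddM /= mulr1.
Qed.

Lemma usubmx_row'0_col' p q (M : 'M[R]_(p.+1 + q)) (j : 'I_(p.+1 + q)) :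
  usubmx (row' 0 (col' j M) : 'M_(p + q)) = col' j (row' 0 (usubmx M)).
Proof. by apply/matrixP => x y; rewrite !mxE; congr (M _ _); apply/val_inj. Qed.

Lemma dsubmx_row'0_col' p q (M : 'M[R]_(p.+1 + q)) (j : 'I_(p.+1 + q)) :
  dsubmx (row' 0 (col' j M) : 'M_(p + q)) = col' j (dsubmx M).
Proof. by apply/matrixP => x y; rewrite !mxE; congr (M _ _); apply/val_inj. Qed.

(* Induction on p through the expansion along the first row. *)
Lemma laplace_expansion p q (M : 'M[R]_(p + q)) :
  \det M = \sum_(I : {set 'I_(p + q)} | #|I| == p)
     laplace_sign p I * \det (usubmx M *m selmx p I) * \det (dsubmx M *m selmx q (~: I)).
Proof.
elim: p M => [|p IH] M.
  rewrite (big_pred1 set0) => [|I]; last by rewrite /= cards_eq0.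
  rewrite /laplace_sign big_set0 expr0 mul1r det_mx00 mul1r setC0 selmx_setT mulmx1.
  by congr (\det _); apply/matrixP => x y; rewrite mxE; congr (M _ _); apply/val_inj.
set U := usubmx M; set D := dsubmx M.
transitivity (\sum_(j < p.+1 + q) \sum_(I : {set 'I_(p + q)} | #|I| == p)
   M 0 j * ((-1) ^+ val j * (laplace_sign p I * \det (row' 0 U *m selmx p (lift j @: I))
      * \det (D *m selmx q (lift j @: ~: I))))).
  rewrite (expand_det_row _ ord0); apply: eq_bigr => j _.
  rewrite /cofactor IH usubmx_row'0_col' dsubmx_row'0_col' add0n !big_distrr /=.
  by apply: eq_bigr => I _; rewrite !col'_mulmx_selmx.
transitivity (\sum_(I : {set 'I_(p.+1 + q)} | #|I| == p.+1) \sum_(a in I)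
   laplace_sign p.+1 I * (U 0 a * (-1) ^+ pos_in I a * \det (row' 0 U *m selmx p (I :\ a)))
     * \det (D *m selmx q (~: I))); last first.
  apply: eq_bigr => I /eqP cI; rewrite (det_mulmx_selmx_row0 _ cI).
  by rewrite -big_distrl -big_distrr.
rewrite [RHS](exchange_big_dep predT) //=; apply: eq_bigr => j _.
rewrite [RHS](reindex_onto (fun I : {set 'I_(p + q)} => j |: lift j @: I)
                           (fun I => lift j @^-1: I)) /=; last first.
  by move=> I /andP[_ jI]; apply: lift_preim.
apply: eq_big => [I | I /eqP cI].
  rewrite preim_lift eqxx andbT setU11 andbT cardsU1 notin_lift_imset card_imset //.
  exact: lift_inj.
rewrite setU1K ?notin_lift_imset // setC_lift.
have -> : U 0 j = M 0 j by rewrite mxE; congr (M _ _); apply/val_inj.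
transitivity (M 0 j * ((-1) ^+ val j * laplace_sign p I)
   * \det (row' 0 U *m selmx p (lift j @: I)) * \det (D *m selmx q (lift j @: ~: I))).
  by ring.
by rewrite -(laplace_sign_lift j cI); ring.
Qed.

End Laplace.

Arguments laplace_sign {R n} d I.

Section PluckerPairing.
Variable R : realType.

Lemma sum_ksub n d (F : {set 'I_n} -> R) :
  \sum_(I : ksub n d) F (val I) = \sum_(I : {set 'I_n} | #|I| == d) F I.
Proof.
rewrite [RHS](reindex_omap (val : ksub n d -> {set 'I_n}) insub) => [|I cI]; last first.
  by rewrite insubT.
by apply: eq_bigl => -[I cI] /=; rewrite cI insubT /= eqxx.
Qed.

Lemma basismx_eqmx n d (W : 'M[R]_n) : \rank W = d -> (basismx d W :=: W)%MS.
Proof. by move=> <-; apply: eq_row_base. Qed.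

(* The sum defining H(X), evaluated at Delta(W), is the Laplace expansion of the
   determinant of a basis of W stacked on a basis of X. *)
Lemma plucker_pairing n d (W X : 'M[R]_n) : (d <= n)%N ->
  \rank W = d -> \rank X = (n - d)%N ->
  (\sum_(I : ksub n d) (-1) ^+ ((d * d.+1) %/ 2 + \sum_(a in val I) (val a).+1)%N
      * plucker (n - d) X (~: val I) * plvec d W I = 0) <-> (\rank (W :&: X) != 0%N).
Proof.
move=> le_dn rW rX; rewrite (sum_ksub d (fun I => laplace_sign d I
  * plucker (n - d) X (~: I) * plucker d W I)).
have [q def_n] : exists q, n = (d + q)%N by exists (n - d)%N; rewrite subnKC.
subst n; rewrite addKn in rX *.
set A := basismx d W; set B := basismx q X.
have -> : \sum_(I : {set 'I_(d + q)} | #|I| == d)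
    laplace_sign d I * plucker q X (~: I) * plucker d W I = \det (col_mx A B).
  rewrite laplace_expansion col_mxKu col_mxKd; apply: eq_bigr => I _.
  by rewrite /plucker mulrAC.
have rank_AB : \rank (col_mx A B) = \rank (W + X)%MS.
  by rewrite -addsmxE (adds_eqmx (basismx_eqmx rW) (basismx_eqmx rX)).
have rank_sum := mxrank_sum_cap W X; rewrite rW rX -rank_AB in rank_sum.
have -> : (\rank (W :&: X) != 0%N) = (\det (col_mx A B) == 0).
  rewrite -[\det _ == 0]negbK -unitfE -unitmxE -row_free_unit /row_free.
  by congr negb; apply/eqP/eqP; lia.
exact: rwP eqP.
Qed.

End PluckerPairing.

Lemma setU1_ind (T : finType) (P : {set T} -> Prop) :
  P set0 -> (forall (i : T) (C : {set T}), i \notin C -> P C -> P (i |: C)) ->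
  forall C, P C.
Proof.
move=> P0 PU1 C; move: {2}#|C| (erefl #|C|) => k; elim: k C => [|k IH] C cC.
  by move/eqP: cC; rewrite cards_eq0 => /eqP ->.
have /card_gt0P[i iC] : (0 < #|C|)%N by rewrite cC.
rewrite -(setD1K iC); apply: PU1; first by rewrite setD11.
by apply: IH; move: cC; rewrite (cardsD1 i) iC add1n => -[].
Qed.

Section Arrangement.
Variable R : realType.
Variables n m : nat.
Variable alpha : 'I_m -> 'rV[R]_n.

Local Notation H := (hypmx alpha).
Local Notation F := (flatmx alpha).

Lemma sub_flatmxU k (A : 'M_(k, n)) (C D : {set 'I_m}) :
  (A <= F (C :|: D))%MS = (A <= F C)%MS && (A <= F D)%MS.
Proof.
apply/sub_bigcapmxP/andP => [sub_CD | [/sub_bigcapmxP sub_C /sub_bigcapmxP sub_D] i].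
  by split; apply/sub_bigcapmxP => i iC; apply: sub_CD; rewrite inE iC ?orbT.
by rewrite inE => /orP[]; [apply: sub_C | apply: sub_D].
Qed.

Lemma flatmx1 i : (F [set i] :=: H i)%MS.
Proof. by rewrite /flatmx (big_pred1 i) // => j; rewrite inE. Qed.

Lemma flatmx0 : F set0 = 1%:M.
Proof. by rewrite /flatmx big_pred0 // => i; rewrite inE. Qed.

Lemma flatmxS (C D : {set 'I_m}) : C \subset D -> (F D <= F C)%MS.
Proof.
move=> CD; apply/sub_bigcapmxP => i iC; apply: (bigcapmx_inf i) => //.
exact: (subsetP CD).
Qed.

Lemma capmx_flatmxU (Y : 'M[R]_n) (C D : {set 'I_m}) :
  (Y :&: F (C :|: D) :=: (Y :&: F C) :&: F D)%MS.
Proof. by apply/eqmxP/rV_eqP => u; rewrite !sub_capmx sub_flatmxU andbA. Qed.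

Lemma capmx_flatmxU1 (Y : 'M[R]_n) i (C : {set 'I_m}) :
  (Y :&: F (i |: C) :=: (Y :&: F C) :&: H i)%MS.
Proof.
apply/eqmxP/rV_eqP => u; rewrite !sub_capmx sub_flatmxU (flatmx1 i).
by rewrite [(u <= H i)%MS && _]andbC andbA.
Qed.

Section NonzeroNormals.
Hypothesis alpha_neq0 : forall i, alpha i != 0.

Lemma mxrank_hypmx i : (\rank (H i)).+1 = n.
Proof.
have rank_alpha : \rank (alpha i) = 1%N by rewrite rank_rV alpha_neq0.
have := rank_leq_col (alpha i); rewrite /hypmx mxrank_ker mxrank_tr rank_alpha.
by lia.
Qed.

Lemma mxrank_cap_hypmx (Z : 'M[R]_n) i :
  (\rank Z <= (\rank (Z :&: H i)).+1)%N /\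
  (~~ (Z <= H i)%MS -> (\rank (Z :&: H i)).+1 = \rank Z).
Proof.
have := mxrank_sum_cap Z (H i); have := mxrank_hypmx i.
have := rank_leq_col (Z + H i)%MS; move=> le_sum_n rank_H sum_cap.
split => [|Z_notin_H]; first by lia.
have : (\rank (H i) < \rank (Z + H i))%N.
  by rewrite (ltn_leqif (mxrank_leqif_sup (addsmxSr Z (H i)))) addsmx_sub submx_refl andbT.
by lia.
Qed.

Lemma mxrank_le_cap_flatmx (Y : 'M[R]_n) (C : {set 'I_m}) :
  (\rank Y <= \rank (Y :&: F C) + #|C|)%N.
Proof.
elim/setU1_ind: C => [|i C iC IH]; first by rewrite flatmx0 capmx1 cards0 addn0.
rewrite (capmx_flatmxU1 Y i C) cardsU1 iC.
by have [le_rank _] := mxrank_cap_hypmx (Y :&: F C)%MS i; lia.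
Qed.

(* Greedily keep the hyperplanes of S that cut the current intersection. *)
Lemma independent_subfamily (Y : 'M[R]_n) (S : {set 'I_m}) :
  exists2 C : {set 'I_m}, C \subset S &
    (Y :&: F C :=: Y :&: F S)%MS /\ (\rank (Y :&: F C) + #|C| = \rank Y)%N.
Proof.
elim/setU1_ind: S => [|i S iS [C CS [eqC rankC]]].
  by exists set0; rewrite ?sub0set // flatmx0 capmx1 cards0 addn0.
have eqU1 := capmx_flatmxU1 Y i S.
have [C_sub_H | C_notin_H] := boolP (Y :&: F C <= H i)%MS.
  exists C; first by rewrite (subset_trans CS) ?subsetUr.
  split => //; apply/eqmxP/rV_eqP => u; rewrite eqU1 [in RHS]sub_capmx -eqC.
  by apply/idP/andP => [uC | [] //]; split=> //; apply: submx_trans uC C_sub_H.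
have iC : i \notin C by apply: contra iS; apply: (subsetP CS).
exists (i |: C); first exact: setUS.
split.
  apply: eqmx_trans (capmx_flatmxU1 _ _ _) _; apply: eqmx_trans _ (eqmx_sym eqU1).
  exact: cap_eqmx.
have [_ rank_cut] := mxrank_cap_hypmx (Y :&: F C)%MS i.
by rewrite capmx_flatmxU1 cardsU1 iC -rankC -(rank_cut C_notin_H); lia.
Qed.

(* Extend an independent subfamily of S, cutting W down to W :&: F S, by
   hyperplanes from outside it until W is cut down to W :&: T = 0. *)
Lemma complementary_flatmx (W : 'M[R]_n) (S : {set 'I_m}) :
  \rank (W :&: Tmx alpha) = 0%N ->
  exists C D : {set 'I_m}, [/\ C \subset S, \rank (W :&: F C) = \rank (W :&: F S),
    #|D| = \rank (W :&: F S), \rank (W :&: F (C :|: D)) = 0%N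
    & (\rank (F (C :|: D)) + \rank W)%N = n].
Proof.
move=> capT0; have [C CS [eqC rankC]] := independent_subfamily W S.
have [D DC [eqD rankD]] := independent_subfamily (W :&: F C)%MS (~: C).
have capCD0 : \rank (W :&: F (C :|: D)) = 0%N.
  by rewrite capmx_flatmxU eqD -capmx_flatmxU setUCr.
rewrite -capmx_flatmxU capCD0 add0n in rankD.
have cardCD : #|C :|: D| = \rank W.
  rewrite cardsU (_ : C :&: D = set0) ?cards0 ?subn0; first by lia.
  by apply/setP => x; rewrite !inE; apply/andP => -[xC /(subsetP DC)]; rewrite inE xC.
exists C, D; split => //; rewrite -?eqC //.
have := mxrank_le_cap_flatmx 1%:M (C :|: D); rewrite cap1mx mxrank1 cardCD.
have := mxrank_sum_cap W (F (C :|: D)); rewrite capCD0.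
by have := rank_leq_col (W + F (C :|: D))%MS; lia.
Qed.

Lemma mxrank_cap_flatmx_le (W1 W2 : 'M[R]_n) (S : {set 'I_m}) :
  \rank (W1 :&: Tmx alpha) = 0%N ->
  (forall B, (\rank (F B) + \rank W1)%N = n -> \rank (W1 :&: F B) = 0%N ->
     \rank (W2 :&: F B) = 0%N) ->
  (\rank (W2 :&: F S) <= \rank (W1 :&: F S))%N.
Proof.
move=> capT0 meet0; have [C [D [CS _ cardD capCD0 codim]]] := complementary_flatmx S capT0.
have le_SC : (\rank (W2 :&: F S) <= \rank (W2 :&: F C))%N.
  by apply/mxrankS/capmxS => //; apply: flatmxS.
have := mxrank_le_cap_flatmx (W2 :&: F C)%MS D.
by rewrite -capmx_flatmxU (meet0 _ codim capCD0) cardD; lia.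
Qed.

End NonzeroNormals.
End Arrangement.

Section PluckerInterior.
Variable R : realType.
Variables n m : nat.
Variable alpha : 'I_m -> 'rV[R]_n.
Hypothesis alpha_neq0 : forall i, alpha i != 0.

Local Notation F := (flatmx alpha).

(* Otherwise P /\ H(X) would be a flat strictly inside P containing x. *)
Lemma flat_interior_Hk d (P : (ksub n d -> R) -> Prop) (x y : ksub n d -> R) S :
  flat_k alpha d P -> flat_interior alpha d P x -> flat_interior alpha d P y ->
  (\rank (F S) + d)%N = n -> Hk alpha d S x -> Hk alpha d S y.
Proof.
move=> [Fam [codimFam defP]] [Px x_notin] [Py _] codimS HSx.
apply/eqP; apply: contraT => /eqP HSy; exfalso.
apply: (x_notin (fun z => P z /\ Hk alpha d S z)).
- exists (S |: Fam); split => [S' | z].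
    by rewrite !inE => /orP[/eqP -> | /codimFam].
  split=> [[/defP Pz HSz] S' | HFam].
    by rewrite !inE => /orP[/eqP -> | /Pz].
  split; last by apply: HFam; rewrite setU11.
  by apply/defP => S' S'Fam; apply: HFam; rewrite inE S'Fam orbT.
- by move=> z [].
- by exists y; split => // -[_ /HSy].
- by [].
Qed.

Lemma cap_flatmx_eq0_transfer d (P : (ksub n d -> R) -> Prop) (W W' : 'M[R]_n) B :
  flat_k alpha d P -> \rank W = d -> \rank W' = d ->
  flat_interior alpha d P (plvec d W) -> flat_interior alpha d P (plvec d W') ->
  (\rank (F B) + d)%N = n -> \rank (W :&: F B) = 0%N -> \rank (W' :&: F B) = 0%N.
Proof.
move=> flatP rW rW' intW intW' codimB capW0; apply/eqP; apply: contraT => capW'.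
have le_dn : (d <= n)%N by rewrite -rW rank_leq_col.
have rB : \rank (F B) = (n - d)%N by lia.
have /(plucker_pairing le_dn rW rB) : Hk alpha d B (plvec d W).
  by apply: (flat_interior_Hk flatP intW' intW codimB); apply/(plucker_pairing le_dn rW' rB).
by rewrite capW0.
Qed.

Lemma mxrank_cap_flatmx_eq d (P : (ksub n d -> R) -> Prop) (W1 W2 : 'M[R]_n) :
  flat_k alpha d P -> \rank W1 = d -> \rank W2 = d ->
  \rank (W1 :&: Tmx alpha) = 0%N -> \rank (W2 :&: Tmx alpha) = 0%N ->
  flat_interior alpha d P (plvec d W1) -> flat_interior alpha d P (plvec d W2) ->
  forall S, \rank (W1 :&: F S) = \rank (W2 :&: F S).
Proof.
move=> flatP rW1 rW2 capT1 capT2 int1 int2 S; apply/eqP; rewrite eqn_leq.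
apply/andP; split; apply: mxrank_cap_flatmx_le => // B.
  by rewrite rW2; apply: cap_flatmx_eq0_transfer flatP rW2 rW1 int2 int1.
by rewrite rW1; apply: cap_flatmx_eq0_transfer flatP rW1 rW2 int1 int2.
Qed.

End PluckerInterior.

Section OrthogonalComplement.
Variable R : realType.
Variable n : nat.
Implicit Types U T Z : 'M[R]_n.

Definition ocompl_in U T := (U :&: (perpmx U + perpmx T))%MS.

Lemma perpmx_orth (a b : 'rV[R]_n) U : (a <= perpmx U)%MS -> (b <= U)%MS -> a *m b^T = 0.
Proof.
rewrite /perpmx sub_kermx => /eqP aU /submxP[w ->].
by rewrite trmx_mul mulmxA aU mul0mx.
Qed.

Lemma rV_self_orth_eq0 (v : 'rV[R]_n) : v *m v^T = 0 -> v = 0.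
Proof.
move=> /(congr1 (fun M : 'M_1 => M 0 0)); rewrite !mxE => sum_sq0.
have sq_ge0 i : 0 <= v 0 i * v^T i 0 by rewrite mxE -expr2 sqr_ge0.
apply/rowP => j.
have /eqP := @psumr_eq0P _ _ predT (fun i => v 0 i * v^T i 0) (fun i _ => sq_ge0 i) sum_sq0 j isT.
by rewrite mxE mulf_eq0 orbb mxE => /eqP.
Qed.

Lemma mxrank_eq0_rV U : (forall v : 'rV_n, (v <= U)%MS -> v = 0) -> \rank U = 0%N.
Proof.
move=> only0; apply/eqP; rewrite mxrank_eq0 -submx0.
by apply/rV_subP => v /only0 ->; apply: sub0mx.
Qed.

Lemma mxrank_perpmx U : \rank (perpmx U) = (n - \rank U)%N.
Proof. by rewrite /perpmx mxrank_ker mxrank_tr. Qed.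

Lemma mxrank_cap_perpmx U T : \rank (perpmx U :&: perpmx T) = (n - \rank (U + T))%N.
Proof.
rewrite (addsmxE U T) -(mxrank_tr (col_mx U T)) -mxrank_ker.
apply: eqmx_rank; apply/rV_eqP => v.
by rewrite sub_capmx /perpmx !sub_kermx tr_col_mx mul_mx_row row_mx_eq0.
Qed.

Lemma mxrank_ocompl_in U T : \rank (ocompl_in U T) = (\rank U - \rank (U :&: T))%N.
Proof.
have capU0 : \rank (U :&: perpmx U) = 0%N.
  apply: mxrank_eq0_rV => v; rewrite sub_capmx => /andP[vU vUp].
  exact/rV_self_orth_eq0/(perpmx_orth vUp vU).
have fullU : \rank (U + (perpmx U + perpmx T)) = n.
  apply/eqP; rewrite eqn_leq rank_leq_col /=.
  have := mxrank_sum_cap U (perpmx U); rewrite capU0 mxrank_perpmx.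
  have := rank_leq_col U; have : (\rank (U + perpmx U) <= \rank (U + (perpmx U + perpmx T)))%N.
    by apply/mxrankS/addsmxS => //; apply: addsmxSl.
  by lia.
have := mxrank_sum_cap (perpmx U) (perpmx T); rewrite mxrank_cap_perpmx !mxrank_perpmx.
have := mxrank_sum_cap U (perpmx U + perpmx T)%MS; rewrite fullU.
have := mxrank_sum_cap U T; have := rank_leq_col (U + T)%MS.
have := rank_leq_col U; have := rank_leq_col T; rewrite /ocompl_in; lia.
Qed.

Lemma capmx_ocompl_in_eq0 U T : \rank (ocompl_in U T :&: T) = 0%N.
Proof.
apply: mxrank_eq0_rV => v; rewrite !sub_capmx => /andP[/andP[vU /sub_addsmxP[u def_v]] vT].
apply: rV_self_orth_eq0; rewrite {1}def_v mulmxDl.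
by rewrite (perpmx_orth (submxMl _ _) vU) (perpmx_orth (submxMl _ _) vT) addr0.
Qed.

Lemma ocompl_in_decomp U T Z : (T <= Z)%MS ->
  \rank (U :&: Z) = (\rank (U :&: T) + \rank (ocompl_in U T :&: Z))%N.
Proof.
move=> TZ; set C := (U :&: T)%MS; set W := ocompl_in U T.
have capCW0 : \rank (C :&: W) = 0%N.
  apply/eqP; rewrite -leqn0 -(capmx_ocompl_in_eq0 U T); apply/mxrankS.
  by rewrite sub_capmx capmxSr (submx_trans (capmxSl _ _) (capmxSr _ _)).
have sub_CW_U : (C + W <= U)%MS by rewrite addsmx_sub !capmxSl.
have U_CW : (U <= C + W)%MS.
  rewrite -(mxrank_leqif_sup sub_CW_U).2; apply/eqP.
  have := mxrank_sum_cap C W; rewrite capCW0 mxrank_ocompl_in -/C.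
  have : (\rank C <= \rank U)%N by apply/mxrankS/capmxSl.
  by lia.
have -> : \rank (U :&: Z) = \rank (C + W :&: Z).
  apply: eqmx_rank; apply/rV_eqP => v; apply/idP/idP => [|]; last first.
    move/submx_trans; apply; rewrite addsmx_sub !sub_capmx capmxSl (submx_trans (capmxSr _ _) TZ).
    by rewrite (submx_trans (capmxSl _ _) (capmxSl _ _)) capmxSr.
  rewrite sub_capmx => /andP[vU vZ]; have /sub_addsmxP[u def_v] := submx_trans vU U_CW.
  have cZ : (u.1 *m C <= Z)%MS by rewrite (submx_trans (submxMl _ _)) ?(submx_trans (capmxSr _ _) TZ).
  have wZ : (u.2 *m W <= Z)%MS.
    by rewrite (_ : u.2 *m W = v - u.1 *m C) ?addmx_sub ?eqmx_opp // def_v addrC addKr.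
  by rewrite def_v addmx_sub_adds ?submxMl // sub_capmx submxMl.
have := mxrank_sum_cap C (W :&: Z)%MS; rewrite (_ : \rank (C :&: (W :&: Z)) = 0%N) ?addn0 //.
by apply/eqP; rewrite -leqn0 -capCW0; apply/mxrankS/capmxS => //; apply: capmxSl.
Qed.

End OrthogonalComplement.

Section RestrictedLattice.
Variable R : realType.
Variables n m : nat.
Variable alpha : 'I_m -> 'rV[R]_n.

Local Notation H := (hypmx alpha).
Local Notation F := (flatmx alpha).

Definition restr_flatmx (U : 'M[R]_n) (S : {set 'I_m}) : 'M[R]_n := (<< U :&: F S >>)%MS.

Lemma restr_flatP (U X : 'M[R]_n) :
  restr_flat alpha U X <-> exists S, X = restr_flatmx U S.
Proof.
have gen_eq (S : {set 'I_m}) : (<< U :&: \bigcap_(i in S) (U :&: H i) >>)%MS = restr_flatmx U S.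
  apply/eq_genmx/eqmxP/rV_eqP => u; rewrite !sub_capmx; case uU: (u <= U)%MS => //=.
  by apply/sub_bigcapmxP/sub_bigcapmxP => sub_u i /sub_u; rewrite ?sub_capmx ?uU // => /andP[].
split => [[S [_ ->]] | [S ->]]; first by exists S; rewrite gen_eq.
exists [set i in S | ~~ (U <= H i)%MS]; split => [i | ]; first by rewrite inE => /andP[].
rewrite gen_eq; apply/eq_genmx/eqmxP/rV_eqP => u; rewrite !sub_capmx.
case uU: (u <= U)%MS => //=; apply/sub_bigcapmxP/sub_bigcapmxP => sub_u i.
  by rewrite inE => /andP[/sub_u].
have [U_sub_H _ | U_notin_H iS] := boolP (U <= H i)%MS; first exact: submx_trans uU U_sub_H.
by apply: sub_u; rewrite inE iS.
Qed.

Lemma restr_flatmx_sub (U : 'M[R]_n) (S S' : {set 'I_m}) :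
  (restr_flatmx U S <= restr_flatmx U S')%MS =
  (\rank (U :&: F (S :|: S')) == \rank (U :&: F S)).
Proof.
rewrite /restr_flatmx !genmxE capmx_flatmxU.
rewrite (mxrank_leqif_sup (capmxSl (U :&: F S)%MS (F S'))).2.
by rewrite !sub_capmx capmxSl capmxSr.
Qed.

Lemma lattice_iso_of_mxrank (U1 U2 : 'M[R]_n) :
  (forall S, \rank (U1 :&: F S) = \rank (U2 :&: F S)) ->
  lattice_iso (restr_flat alpha U1) (restr_flat alpha U2).
Proof.
move=> eq_rank.
have sub_eq S S' : (restr_flatmx U1 S <= restr_flatmx U1 S')%MS =
                   (restr_flatmx U2 S <= restr_flatmx U2 S')%MS.
  by rewrite !restr_flatmx_sub !eq_rank.
pose preim X := odflt set0 [pick S | X == restr_flatmx U1 S].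
have preimK S : restr_flatmx U1 (preim (restr_flatmx U1 S)) = restr_flatmx U1 S.
  by rewrite /preim; case: pickP => [S' /eqP <- | /(_ S)]; rewrite ?eqxx.
have eq_restr2 S S' : restr_flatmx U1 S = restr_flatmx U1 S' ->
    restr_flatmx U2 S = restr_flatmx U2 S'.
  move=> eq1; have le12 : (restr_flatmx U2 S <= restr_flatmx U2 S')%MS.
    by rewrite -sub_eq eq1 submx_refl.
  have le21 : (restr_flatmx U2 S' <= restr_flatmx U2 S)%MS.
    by rewrite -sub_eq eq1 submx_refl.
  by apply/eq_genmx/eqmxP; move: le12 le21; rewrite /restr_flatmx !genmxE => -> ->.
exists (fun X => restr_flatmx U2 (preim X)); split; [|split].
- by move=> X _; apply/restr_flatP; exists (preim X).
- move=> Y /restr_flatP[S ->]; exists (restr_flatmx U1 S).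
  by split; [apply/restr_flatP; exists S | apply: eq_restr2; rewrite preimK].
- by move=> X Y /restr_flatP[S ->] /restr_flatP[S' ->]; rewrite -sub_eq !preimK.
Qed.

End RestrictedLattice.

Theorem corollary2p4 (R : realType) (n m : nat) (alpha : 'I_m -> 'rV[R]_n)
  (alpha_nz : forall j, alpha j != 0) (k : nat) (U1 U2 : 'M[R]_n) :
  (\rank U1 = k -> \rank U2 = k ->
   forall i : nat, (i <= k)%N ->
   forall P : (ksub n (k - i)%N -> R) -> Prop,
     flat_k alpha _ P ->
     S_iP alpha k i P U1 -> S_iP alpha k i P U2 ->
     lattice_iso (restr_flat alpha U1) (restr_flat alpha U2))
  /\
  (\rank U1 = k -> \rank U2 = k ->
   \rank (Tmx alpha) = 0%N ->
   forall P : (ksub n k -> R) -> Prop,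
     flat_k alpha _ P ->
     flat_interior alpha _ P (plvec k U1) -> flat_interior alpha _ P (plvec k U2) ->
     lattice_iso (restr_flat alpha U1) (restr_flat alpha U2)).
Proof.
have T_sub_flat S : (Tmx alpha <= flatmx alpha S)%MS by apply/flatmxS/subsetT.
split=> [rU1 rU2 i _ P flatP [_ [capT1 int1]] [_ [capT2 int2]] |
         rU1 rU2 rT0 P flatP int1 int2].
  apply: lattice_iso_of_mxrank => S.
  rewrite (ocompl_in_decomp U1 (T_sub_flat S)) (ocompl_in_decomp U2 (T_sub_flat S)).
  rewrite capT1 capT2; congr (_ + _)%N.
  by apply: (mxrank_cap_flatmx_eq alpha_nz flatP _ _ _ _ int1 int2);
    rewrite ?mxrank_ocompl_in ?capmx_ocompl_in_eq0 ?rU1 ?rU2 ?capT1 ?capT2.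
have capT0 (U : 'M[R]_n) : \rank (U :&: Tmx alpha) = 0%N.
  by apply/eqP; rewrite -leqn0 -rT0; apply/mxrankS/capmxSr.
apply: lattice_iso_of_mxrank.
exact: (mxrank_cap_flatmx_eq alpha_nz flatP rU1 rU2 (capT0 U1) (capT0 U2) int1 int2).
Qed.
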